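(* Let $n>1$ be an odd integer and let $M$ be either $(n+1)/2$ or $n-1$. Then \[ \sum_{k=0}^{M}[4k-1]\frac{(aq^{-1},q^{-1}/a,q^{-1}/b,cq^{-1},dq^{-1},q^{-1};q^2)_k}{(q^2/a,aq^2,bq^2,q^2/c,q^2/d,q^2;q^2)_k}\bigg(\frac{bq^7}{cd}\bigg)^k \equiv0\pmod{\Phi_n(q)}. \]
   Context: Here $q,a,b,c,d$ are indeterminates. The $q$-shifted factorial is $(x;q)_0=1$, $(x;q)_k=(1-x)(1-xq)\cdots(1-xq^{k-1})$ for $k\ge1$, and $(x_1,\dots,x_m;q)_k=(x_1;q)_k\cdots(x_m;q)_k$. The $q$-integer is $[m]=(1-q^m)/(1-q)$, and $\Phi_n(q)$ is the $n$-th cyclotomic polynomial in $q$. A congruence $A\equiv B$ modulo a polynomial $P$ between rational functions means that $A-B$ is a rational function whose numerator is divisible by $P$ and whose denominator is coprime to $P$. *)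

From HB Require Import structures.
From mathcomp Require Import all_boot all_order all_algebra.
From mathcomp Require Import cyclotomic.
From mathcomp Require Import mpoly.
Set Implicit Arguments. Unset Strict Implicit. Unset Printing Implicit Defensive.
Import Order.TTheory GRing.Theory Num.Theory.
Local Open Scope ring_scope.

(* Coefficient field K = Q(a,b,c,d): fraction field of Q[a,b,c,d]. *)
Definition Kc : fieldType := {fraction {mpoly rat[4]}}.
Definition Pq : idomainType := {poly Kc}.
Definition Fq : fieldType := {fraction Pq}.

Definition qv : Fq := tofrac ('X : Pq).
Definition avar (i : 'I_4) : Fq :=
  tofrac (((tofrac (mpolyX rat (U_(i))%MM)) : Kc)%:P : Pq).
Definition av : Fq := avar 0.
Definition bv : Fq := avar 1.
Definition cv : Fq := avar 2.
Definition dv : Fq := avar 3.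

Definition qpoch (F : comRingType) (x p : F) (k : nat) : F :=
  \prod_(i < k) (1 - x * p ^+ i).

Definition qint (F : fieldType) (q : F) (m : int) : F := (1 - q ^ m) / (1 - q).

Definition PhiK (n : nat) : Pq := map_poly (intr : int -> Kc) 'Phi_n.

Definition congr_mod (A B : Fq) (P : Pq) : Prop :=
  exists N D : Pq, [/\ D != 0, P %| N, coprimep D P & A - B = tofrac N / tofrac D].

Definition term (k : nat) : Fq :=
  let q := qv in let a := av in let b := bv in let c := cv in let d := dv in
  qint q (4 * k%:Z - 1) *
  (qpoch (a / q) (q ^+ 2) k * qpoch (1 / (q * a)) (q ^+ 2) k * qpoch (1 / (q * b)) (q ^+ 2) k *
   qpoch (c / q) (q ^+ 2) k * qpoch (d / q) (q ^+ 2) k * qpoch (q ^-1) (q ^+ 2) k) /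
  (qpoch (q ^+ 2 / a) (q ^+ 2) k * qpoch (a * q ^+ 2) (q ^+ 2) k * qpoch (b * q ^+ 2) (q ^+ 2) k *
   qpoch (q ^+ 2 / c) (q ^+ 2) k * qpoch (q ^+ 2 / d) (q ^+ 2) k * qpoch (q ^+ 2) (q ^+ 2) k) *
  (b * q ^+ 7 / (c * d)) ^+ k.

From HB Require Import structures.
From mathcomp Require Import all_boot all_order all_algebra.
From mathcomp Require Import cyclotomic algC mpoly ring zify.
Set Implicit Arguments. Unset Strict Implicit. Unset Printing Implicit Defensive.
Import Order.TTheory GRing.Theory Num.Theory.
Local Open Scope ring_scope.

(* Work in the localization of K[q] at Phi_n, K = Q(a, b, c, d); all congruences
   are modulo Phi_n.  Write n = 2m - 1 and rho_x(k) = (x; q^2)_k / (q/x; q^2)_k.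
   Since q^n = 1, the top k factors of (x; q^2)_m are congruent to
   (-x)^k q^(-k^2) (q/x; q^2)_k, which yields the reflection
   rho_x(m - k) = (-x)^m q^(-m^2) (q/x^2)^k rho_x(k).
   The k-th summand is [4k - 1] z^k times the product of the rho_(t/q)(k) over
   t in {1, a, 1/a, 1/b, c, d}, with z = b q^7 / (c d); multiplying the six
   reflections shows that the summands of index k and m - k cancel, so the sum
   up to m vanishes.  For m < k <= n - 1 the factor 1 - q^n of (q^(-1); q^2)_k
   vanishes while all denominators remain units, so these summands vanish too. *)

Lemma qpochD (R : comNzRingType) (x p : R) j k :
  qpoch x p (j + k) = qpoch x p j * qpoch (x * p ^+ j) p k.
Proof.
rewrite /qpoch big_split_ord /=; congr (_ * _).
by apply: eq_bigr => i _; rewrite exprD mulrA.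
Qed.

Lemma prod_exprz_odd (F : fieldType) (x : F) k : x != 0 ->
  \prod_(j < k) x ^ (-1 - 2 * j%:Z) = x ^ (- (k * k)%:Z).
Proof.
move=> x0; elim: k => [|k IH]; first by rewrite big_ord0 expr0z.
by rewrite big_ord_recr /= IH -expfzDr //; congr (_ ^ _); nia.
Qed.

Definition gterm (F : fieldType) (q a b c d : F) (k : nat) : F :=
  qint q (4 * k%:Z - 1) *
  (qpoch (a / q) (q ^+ 2) k * qpoch (1 / (q * a)) (q ^+ 2) k * qpoch (1 / (q * b)) (q ^+ 2) k *
   qpoch (c / q) (q ^+ 2) k * qpoch (d / q) (q ^+ 2) k * qpoch (q ^-1) (q ^+ 2) k) /
  (qpoch (q ^+ 2 / a) (q ^+ 2) k * qpoch (a * q ^+ 2) (q ^+ 2) k * qpoch (b * q ^+ 2) (q ^+ 2) k *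
   qpoch (q ^+ 2 / c) (q ^+ 2) k * qpoch (q ^+ 2 / d) (q ^+ 2) k * qpoch (q ^+ 2) (q ^+ 2) k) *
  (b * q ^+ 7 / (c * d)) ^+ k.

Lemma gterm_prod_ratio (F : fieldType) (q a b c d : F) k :
  gterm q a b c d k = qint q (4 * k%:Z - 1) * (b * q ^+ 7 / (c * d)) ^+ k *
    \prod_(t <- [:: 1; a; a^-1; b^-1; c; d])
      (qpoch (t / q) (q ^+ 2) k / qpoch (q / (t / q)) (q ^+ 2) k).
Proof.
have qt_sq t : q / (t / q) = q ^+ 2 / t by rewrite invfM invrK mulrCA expr2 mulrC.
have qaV x : 1 / (q * x) = x^-1 / q by rewrite div1r invfM mulrC.
rewrite /gterm !qaV !big_cons big_nil !qt_sq !invrK !div1r divr1.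
rewrite [q ^+ 2 * a]mulrC [q ^+ 2 * b]mulrC.
by rewrite !mulr1 !invfM; ring.
Qed.

Lemma div_mul_sqrX (F : fieldType) (x q : F) i : q != 0 ->
  x / q * (q ^+ 2) ^+ i = x * q ^ (2 * i%:Z - 1).
Proof.
by move=> q0; rewrite expfzDr // -exprM -PoszM mulrAC -mulrA.
Qed.

Lemma div_div_mul_sqrX (F : fieldType) (x q : F) i :
  q / (x / q) * (q ^+ 2) ^+ i = x^-1 * q ^+ (2 * i + 2).
Proof. by rewrite invfM invrK mulrCA -expr2 -mulrA -exprM -exprD addnC. Qed.

Lemma coprimep_dvd_subC (F : fieldType) (P p g : {poly F}) (c : F) :
  c != 0 -> P %| p * g - c%:P -> coprimep p P.
Proof.
move=> c0 /dvdpP [h e].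
apply/Bezout_eq1_coprimepP; exists (c^-1 *: g, - (c^-1 *: h)) => /=.
rewrite mulNr -!scalerAl -scalerBr -e mulrC opprB addrC subrK.
by rewrite -mul_polyC -polyCM mulVf.
Qed.

Lemma coprimep_neq0 (F : fieldType) (P D : {poly F}) :
  (1 < size P)%N -> coprimep D P -> D != 0.
Proof.
move=> P_nonconst; apply: contraL => /eqP ->.
by rewrite coprime0p -size_poly_eq1 neq_ltn P_nonconst orbT.
Qed.

Section Localization.
Variables (F L : fieldType) (iota : {rmorphism {poly F} -> L}) (P : {poly F}).
Implicit Types (x y : L) (N D : {poly F}).

(* [regular x]: x lies in the localization of F[X] at P, embedded in L by iota;
   [vanishing x]: x lies in its maximal ideal.  Requiring [iota D != 0], which is
   automatic when iota is injective and P is not constant, keeps this section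
   hypothesis-free. *)
Definition regular x :=
  exists N D, [/\ coprimep D P, iota D != 0 & x = iota N / iota D].
Definition vanishing x :=
  exists N D, [/\ P %| N, coprimep D P, iota D != 0 & x = iota N / iota D].
Definition eqmod x y := vanishing (x - y).
Definition regular_unit x := [/\ x != 0, regular x & regular x^-1].

Lemma regular_poly N : regular (iota N).
Proof. by exists N, 1; rewrite coprime1p rmorph1 oner_neq0 divr1. Qed.

Lemma regular1 : regular 1. Proof. by rewrite -(rmorph1 iota); apply: regular_poly. Qed.

Lemma regularN x : regular x -> regular (- x).
Proof. by move=> [N [D [cD D0 ->]]]; exists (- N), D; rewrite rmorphN mulNr. Qed.

Lemma regularD x y : regular x -> regular y -> regular (x + y).
Proof.
move=> [N1 [D1 [c1 D10 ->]]] [N2 [D2 [c2 D20 ->]]].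
exists (N1 * D2 + N2 * D1), (D1 * D2).
by rewrite coprimepMl c1 c2 rmorphM mulf_neq0 // addf_div // rmorphD !rmorphM.
Qed.

Lemma regularM x y : regular x -> regular y -> regular (x * y).
Proof.
move=> [N1 [D1 [c1 D10 ->]]] [N2 [D2 [c2 D20 ->]]].
exists (N1 * N2), (D1 * D2).
by rewrite coprimepMl c1 c2 rmorphM mulf_neq0 // mulf_div rmorphM.
Qed.

Lemma regularB x y : regular x -> regular y -> regular (x - y).
Proof. by move=> rx ry; apply/regularD/regularN. Qed.

Lemma regularX x k : regular x -> regular (x ^+ k).
Proof.
by move=> rx; elim: k => [|k IH]; rewrite ?expr0 ?exprS; [apply: regular1 | apply: regularM].
Qed.

Lemma regular_prod (I : Type) (r : seq I) (Q : pred I) (f : I -> L) :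
  (forall i, Q i -> regular (f i)) -> regular (\prod_(i <- r | Q i) f i).
Proof. exact: (big_ind regular regular1 regularM). Qed.

Lemma vanishing_poly N : P %| N -> vanishing (iota N).
Proof. by exists N, 1; rewrite coprime1p rmorph1 oner_neq0 divr1. Qed.

Lemma vanishing0 : vanishing 0.
Proof. by rewrite -(rmorph0 iota); apply/vanishing_poly/dvdp0. Qed.

Lemma vanishingMl x y : regular x -> vanishing y -> vanishing (x * y).
Proof.
move=> [N1 [D1 [c1 D10 ->]]] [N2 [D2 [d2 c2 D20 ->]]].
exists (N1 * N2), (D1 * D2).
by rewrite dvdp_mull // coprimepMl c1 c2 rmorphM mulf_neq0 // mulf_div rmorphM.
Qed.

Lemma vanishingMr x y : vanishing x -> regular y -> vanishing (x * y).
Proof. by rewrite mulrC => vx ry; apply: vanishingMl. Qed.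

Lemma vanishingN x : vanishing x -> vanishing (- x).
Proof. by rewrite -mulN1r; apply/vanishingMl/regularN/regular1. Qed.

Lemma vanishingD x y : vanishing x -> vanishing y -> vanishing (x + y).
Proof.
move=> [N1 [D1 [d1 c1 D10 ->]]] [N2 [D2 [d2 c2 D20 ->]]].
exists (N1 * D2 + N2 * D1), (D1 * D2).
rewrite dvdp_add ?dvdp_mulr // coprimepMl c1 c2 rmorphM mulf_neq0 //.
by rewrite addf_div // rmorphD !rmorphM.
Qed.

Lemma vanishing_sum (I : Type) (r : seq I) (Q : pred I) (f : I -> L) :
  (forall i, Q i -> vanishing (f i)) -> vanishing (\sum_(i <- r | Q i) f i).
Proof. exact: (big_ind vanishing vanishing0 vanishingD). Qed.

Lemma vanishing_halve x : (2 : F) != 0 -> vanishing (x *+ 2) -> vanishing x.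
Proof.
move=> two_neq0 v2x.
have -> : x = x *+ 2 * iota (2^-1 : F)%:P.
  rewrite -[x *+ 2]mulr_natr -mulrA.
  have -> : 2%:R = iota (2 : F)%:P by rewrite polyC_natr rmorph_nat.
  by rewrite -rmorphM -polyCM mulfV // rmorph1 mulr1.
by apply: vanishingMr v2x (regular_poly _).
Qed.

Lemma regular_unit_poly N : coprimep N P -> iota N != 0 -> regular_unit (iota N).
Proof.
move=> cN N0; split=> //; first exact: regular_poly.
by exists 1, N; rewrite rmorph1 div1r.
Qed.

Lemma regular_unit1 : regular_unit 1.
Proof.
by rewrite -(rmorph1 iota); apply: regular_unit_poly; rewrite ?coprime1p ?rmorph1 ?oner_neq0.
Qed.

Lemma regular_unitM x y : regular_unit x -> regular_unit y -> regular_unit (x * y).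
Proof.
move=> [x0 rx rx'] [y0 ry ry']; split; rewrite ?mulf_neq0 ?invfM //.
  exact: regularM.
exact: regularM.
Qed.

Lemma regular_unitV x : regular_unit x -> regular_unit x^-1.
Proof. by case=> x0 rx rx'; split; rewrite ?invr_eq0 ?invrK. Qed.

Lemma regular_unitN x : regular_unit x -> regular_unit (- x).
Proof. by case=> x0 rx rx'; split; rewrite ?oppr_eq0 ?invrN //; apply: regularN. Qed.

Lemma regular_unitX x k : regular_unit x -> regular_unit (x ^+ k).
Proof.
move=> ux; elim: k => [|k IH]; first exact: regular_unit1.
by rewrite exprS; apply: regular_unitM.
Qed.

Lemma regular_unit_prod (I : Type) (r : seq I) (Q : pred I) (f : I -> L) :
  (forall i, Q i -> regular_unit (f i)) -> regular_unit (\prod_(i <- r | Q i) f i).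
Proof. exact: (big_ind regular_unit regular_unit1 regular_unitM). Qed.

Lemma regular_unitMl x y :
  regular x -> regular y -> regular_unit (x * y) -> regular_unit x.
Proof.
move=> rx ry [xy0 _ rxy'].
have x0 : x != 0 by apply: contraNneq xy0 => ->; rewrite mul0r.
have y0 : y != 0 by apply: contraNneq xy0 => ->; rewrite mulr0.
have xV : y * (x * y)^-1 = x^-1 by rewrite invfM mulrCA mulfV ?mulr1.
by split=> //; rewrite -xV; apply: regularM.
Qed.

Lemma eqmod_refl x : eqmod x x.
Proof. by rewrite /eqmod subrr; apply: vanishing0. Qed.

Lemma eqmod_sym x y : eqmod x y -> eqmod y x.
Proof. by rewrite /eqmod => vxy; rewrite -opprB; apply: vanishingN. Qed.

Lemma eqmod_trans y x z : eqmod x y -> eqmod y z -> eqmod x z.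
Proof. by move=> exy eyz; rewrite /eqmod -(subrKA y); apply: vanishingD. Qed.

Lemma eqmodD x y x' y' : eqmod x x' -> eqmod y y' -> eqmod (x + y) (x' + y').
Proof. by move=> exx' eyy'; rewrite /eqmod opprD addrACA; apply: vanishingD. Qed.

Lemma eqmodN x y : eqmod x y -> eqmod (- x) (- y).
Proof. by move=> exy; rewrite /eqmod -opprD; apply: vanishingN. Qed.

Lemma eqmodMl c x y : regular c -> eqmod x y -> eqmod (c * x) (c * y).
Proof. by move=> rc exy; rewrite /eqmod -mulrBr; apply: vanishingMl. Qed.

Lemma eqmodMr c x y : regular c -> eqmod x y -> eqmod (x * c) (y * c).
Proof. by rewrite ![_ * c]mulrC; apply: eqmodMl. Qed.

Lemma eqmodM x y x' y' : regular x' -> regular y ->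
  eqmod x x' -> eqmod y y' -> eqmod (x * y) (x' * y').
Proof.
move=> rx' ry exx' eyy'; rewrite /eqmod.
have -> : x * y - x' * y' = (x - x') * y + x' * (y - y').
  by rewrite mulrBl mulrBr addrA subrK.
by apply: vanishingD; [apply: vanishingMr | apply: vanishingMl].
Qed.

Lemma eqmod_prod (I : Type) (r : seq I) (Q : pred I) (f g : I -> L) :
  (forall i, Q i -> [/\ regular (f i), regular (g i) & eqmod (f i) (g i)]) ->
  eqmod (\prod_(i <- r | Q i) f i) (\prod_(i <- r | Q i) g i).
Proof.
move=> fg; suff [] : [/\ regular (\prod_(i <- r | Q i) f i),
    regular (\prod_(i <- r | Q i) g i) &
    eqmod (\prod_(i <- r | Q i) f i) (\prod_(i <- r | Q i) g i)] by [].
apply: (big_ind2 (fun x y => [/\ regular x, regular y & eqmod x y])) => //.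
  by split; [apply: regular1 | apply: regular1 | apply: eqmod_refl].
move=> x1 x2 y1 y2 [rx1 rx2 e1] [ry1 ry2 e2].
by split; [apply: regularM | apply: regularM | apply: eqmodM].
Qed.

Lemma eqmodV x y : regular_unit x -> regular_unit y -> eqmod x y -> eqmod x^-1 y^-1.
Proof.
move=> [x0 _ rx'] [y0 _ ry'] exy; rewrite /eqmod.
have -> : x^-1 - y^-1 = x^-1 * y^-1 * (y - x).
  by rewrite mulrBr mulfVK // mulrAC mulVf // mul1r.
by apply/vanishingMl/eqmod_sym => //; apply: regularM.
Qed.

Lemma eqmod_divl c x y : regular_unit c -> eqmod x (y * c) -> eqmod (x / c) y.
Proof.
move=> [c0 _ rc'] exyc; rewrite /eqmod.
have -> : x / c - y = (x - y * c) * c^-1 by rewrite mulrBl mulfK.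
exact: vanishingMr.
Qed.

End Localization.

Section CyclotomicModulus.
Variables (F : fieldType) (n : nat).
Hypothesis n_gt0 : (0 < n)%N.
Local Notation Phi := (map_poly (intr : int -> F) 'Phi_n).

Lemma Phi_dvd_Xn_sub1 : Phi %| 'X^n - 1.
Proof.
have -> : 'X^n - 1 = map_poly (intr : int -> F) ('X^n - 1).
  by rewrite rmorphB rmorph1 /= map_polyXn.
rewrite -(prod_Cyclotomic n_gt0).
have [_ _ inDn] := divisors_correct n_gt0.
by rewrite (big_rem n) ?inDn //= rmorphM dvdp_mulIl.
Qed.

Lemma Phi_dvd_Xnm_sub1 e : Phi %| 'X^(n * e) - 1.
Proof.
apply: dvdp_trans Phi_dvd_Xn_sub1 _.
by rewrite exprM -{2}(expr1n _ e) subrXX dvdp_mulIl.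
Qed.

Lemma size_Phi : size Phi = (totient n).+1.
Proof.
rewrite size_map_poly_id0 ?size_Cyclotomic //.
by rewrite (monicP (Cyclotomic_monic n)) rmorph1 oner_neq0.
Qed.

Lemma coprimep_X_Phi : coprimep 'X Phi.
Proof.
apply: (coprimep_dvd_subC (g := 'X^(n.-1)) (oner_neq0 F)).
by rewrite -exprS prednK // polyC1 Phi_dvd_Xn_sub1.
Qed.

Lemma coprimep_1_CX_Phi (t : F) e : t ^+ n != 1 -> coprimep (1 - t%:P * 'X^e) Phi.
Proof.
move=> tn1; set u := t%:P * 'X^e.
(* (1 - u)(1 + u + ... + u^(n-1)) = 1 - t^n X^(ne), and X^(ne) = 1 modulo Phi_n. *)
apply: (coprimep_dvd_subC (g := \sum_(i < n) u ^+ i) (c := 1 - t ^+ n)).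
  by rewrite subr_eq0 eq_sym.
have -> : (1 - u) * \sum_(i < n) u ^+ i - (1 - t ^+ n)%:P = - (t ^+ n)%:P * ('X^(n * e) - 1).
  rewrite -[1 - u]opprB mulNr -subrX1 /u exprMn -rmorphXn -exprM [(e * n)%N]mulnC.
  by rewrite polyCB polyC1; ring.
by rewrite dvdp_mull // Phi_dvd_Xnm_sub1.
Qed.

Lemma coprimep_Xs_sub1_Phi (f : {rmorphism rat -> F}) s :
  ~~ (n %| s)%N -> coprimep ('X^s - 1) Phi.
Proof.
move=> n_ndvd_s; have [z z_prim] := C_prim_root_exists n_gt0.
have -> : 'X^s - 1 = map_poly f ('X^s - 1) by rewrite rmorphB rmorph1 /= map_polyXn.
have -> : Phi = map_poly f (map_poly (intr : int -> rat) 'Phi_n).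
  by rewrite -map_poly_comp; apply: eq_map_poly => x /=; rewrite rmorph_int.
rewrite coprimep_map -(coprimep_map (@ratr algC)) rmorphB rmorph1 /= map_polyXn.
rewrite -map_poly_comp (eq_map_poly (fun x => ratr_int algC x)) (Cintr_Cyclotomic z_prim).
(* Over algC the roots of Phi_n are the primitive n-th roots of unity, and those are
   not roots of X^s - 1. *)
apply: Pdiv.ClosedField.root_coprimep => x; rewrite /root !hornerE subr_eq0 => /eqP xs1.
apply/negP=> /eqP cx.
have : root (cyclotomic z n) x by rewrite /root cx.
rewrite (root_cyclotomic z_prim) => x_prim.
by move: n_ndvd_s; rewrite (prim_order_dvd x_prim) xs1 eqxx.
Qed.

End CyclotomicModulus.

Section CongruencesModPhi.
Variables (K L : fieldType) (iota : {rmorphism {poly K} -> L}).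
Variable ratK : {rmorphism rat -> K}.
Hypothesis iota_inj : injective iota.
Variable n : nat.
Hypothesis n_gt1 : (1 < n)%N.

Local Notation P := (map_poly (intr : int -> K) 'Phi_n).
Local Notation regular := (regular iota P).
Local Notation vanishing := (vanishing iota P).
Local Notation eqmod := (eqmod iota P).
Local Notation regular_unit := (regular_unit iota P).
Local Notation q := (iota 'X).
Local Notation "c %:L" := (iota c%:P) (at level 2, format "c %:L").

Let n_gt0 : (0 < n)%N := ltnW n_gt1.

Lemma Phi_nonconst : (1 < size P)%N.
Proof. by rewrite size_Phi ltnS totient_gt0. Qed.

Lemma regular_unit_coprimep N : coprimep N P -> regular_unit (iota N).
Proof.
move=> cNP; apply: (regular_unit_poly cNP).
by rewrite (raddf_eq0 _ iota_inj) (coprimep_neq0 Phi_nonconst cNP).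
Qed.

Lemma regular_unitC c : c != 0 -> regular_unit c%:L.
Proof.
move=> c0; apply/regular_unit_coprimep/(coprimep_dvd_subC (g := 1) c0).
by rewrite mulr1 subrr dvdp0.
Qed.

Lemma regular_unit_q : regular_unit q.
Proof. exact/regular_unit_coprimep/coprimep_X_Phi. Qed.

Lemma q_neq0 : q != 0. Proof. by case: regular_unit_q. Qed.

Lemma regular_unit_qz z : regular_unit (q ^ z).
Proof.
case: z => s; first exact/regular_unitX/regular_unit_q.
exact/regular_unitV/regular_unitX/regular_unit_q.
Qed.

Lemma regular_qz z : regular (q ^ z). Proof. by case: (regular_unit_qz z). Qed.

Lemma vanishing_qnm_sub1 e : vanishing (q ^+ (n * e) - 1).
Proof.
rewrite -rmorphXn -(rmorph1 iota) -rmorphB.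
exact/vanishing_poly/Phi_dvd_Xnm_sub1.
Qed.

Lemma eqmod_qz z t : eqmod (q ^ (z + n%:Z * t)) (q ^ z).
Proof.
rewrite /eqmod expfzDr ?q_neq0 // -[X in _ - X]mulr1 -mulrBr.
apply: vanishingMl; first exact: regular_qz.
case: t => s; first by rewrite -PoszM; apply: vanishing_qnm_sub1.
rewrite NegzE mulrN -invr_expz -PoszM /=.
have qns0 : q ^+ (n * s.+1) != 0 by rewrite expf_neq0 ?q_neq0.
have -> : (q ^+ (n * s.+1))^-1 - 1 = - (q ^+ (n * s.+1))^-1 * (q ^+ (n * s.+1) - 1).
  by field.
apply/vanishingMl/vanishing_qnm_sub1/regularN.
by case: (regular_unitV (regular_unit_qz (n * s.+1)%N)).
Qed.

Lemma iota_polyCV t : (t^-1)%:L = (t%:L)^-1.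
Proof. exact: (fmorphV (iota \o polyC)). Qed.

Lemma regular_unit_1_Cqz t z :
  t != 0 -> t ^+ n != 1 -> regular_unit (1 - t%:L * q ^ z).
Proof.
have unit_nat u s : u != 0 -> u ^+ n != 1 -> regular_unit (1 - u%:L * q ^+ s).
  move=> _ un1; rewrite -rmorphXn -rmorphM -(rmorph1 iota) -rmorphB -polyC1.
  exact/regular_unit_coprimep/coprimep_1_CX_Phi.
move=> t0 tn1; case: z => s; first exact: unit_nat.
have tL0 : t%:L != 0 by case: (regular_unitC t0).
have qs0 : q ^+ s.+1 != 0 by rewrite expf_neq0 ?q_neq0.
have -> : 1 - t%:L * (q ^+ s.+1)^-1 = - t%:L * (q ^+ s.+1)^-1 * (1 - (t^-1)%:L * q ^+ s.+1).
  by rewrite iota_polyCV; field; rewrite tL0.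
apply: regular_unitM; last by apply: unit_nat; rewrite ?invr_eq0 // exprVn invr_eq1.
apply: regular_unitM; first exact/regular_unitN/regular_unitC.
exact/regular_unitV/regular_unitX/regular_unit_q.
Qed.

Lemma regular_unit_1_qz z : ~~ (n %| `|z|)%N -> regular_unit (1 - q ^ z).
Proof.
have unit_nat s : ~~ (n %| s)%N -> regular_unit (1 - q ^+ s).
  move=> ns; rewrite -opprB; apply: regular_unitN.
  rewrite -rmorphXn -(rmorph1 iota) -rmorphB.
  exact/regular_unit_coprimep/(coprimep_Xs_sub1_Phi n_gt0 ratK).
case: z => s /= ns; first exact: unit_nat.
have qs0 : q ^+ s.+1 != 0 by rewrite expf_neq0 ?q_neq0.
have -> : 1 - (q ^+ s.+1)^-1 = - (q ^+ s.+1)^-1 * (1 - q ^+ s.+1) by field.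
apply: regular_unitM; last exact: unit_nat.
exact/regular_unitN/regular_unitV/regular_unitX/regular_unit_q.
Qed.

Lemma regular_unit_1q : regular_unit (1 - q).
Proof.
rewrite -[q in 1 - q]expr1z.
by apply: regular_unit_1_qz; rewrite dvdn1 neq_ltn n_gt1 orbT.
Qed.

Lemma regular_qint z : regular (qint q z).
Proof.
apply: regularM; last by case: regular_unit_1q.
by apply: regularB; [apply: regular1 | apply: regular_qz].
Qed.

Local Notation qp x k := (qpoch x (q ^+ 2) k).

Lemma regular_qpoch_factor x i : regular x -> regular (1 - x * (q ^+ 2) ^+ i).
Proof.
move=> rx; apply: regularB; first exact: regular1.
by apply: regularM => //; apply/regularX/(regular_qz 2).
Qed.

Lemma regular_qpoch x k : regular x -> regular (qp x k).
Proof. by move=> rx; apply: regular_prod => i _; apply: regular_qpoch_factor. Qed.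

Lemma regular_unit_qpoch_le x j k : (j <= k)%N -> regular x ->
  regular_unit (qp x k) -> regular_unit (qp x j).
Proof.
move=> jk rx; rewrite -(subnKC jk) qpochD.
apply: regular_unitMl; apply: regular_qpoch => //.
by apply: regularM => //; apply/regularX/(regular_qz 2).
Qed.

Definition qpoch_ratio x k := qp x k / qp (q / x) k.

Definition rev_coef x k := (- x) ^+ k * q ^ (- (k * k)%:Z).

Lemma regular_unit_q_div x : regular_unit x -> regular_unit (q / x).
Proof. by move=> ux; apply: regular_unitM regular_unit_q (regular_unitV ux). Qed.

Lemma regular_unit_q_div_sqrX x k : regular_unit x -> regular_unit ((q / x ^+ 2) ^+ k).
Proof. by move=> ux; apply/regular_unitX/regular_unit_q_div/regular_unitX. Qed.

Lemma regular_unit_rev_coef x k : regular_unit x -> regular_unit (rev_coef x k).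
Proof.
by move=> ux; apply: regular_unitM (regular_unit_qz _); apply/regular_unitX/regular_unitN.
Qed.

Lemma rev_coef_q_div x k : x != 0 -> rev_coef (q / x) k = (q / x ^+ 2) ^+ k * rev_coef x k.
Proof.
move=> x0; rewrite /rev_coef mulrA -exprMn; congr (_ ^+ _ * _).
by field; rewrite x0.
Qed.

Section Reflection.
Variable m : nat.
Hypothesis n_eq : n.+1 = (2 * m)%N.

Lemma qpoch_top_eqmod x k : (k <= m)%N -> x != 0 -> regular x ->
  eqmod (qp (x * (q ^+ 2) ^+ (m - k)) k) (rev_coef x k * qp (q / x) k).
Proof.
move=> km x0 rx.
have -> : rev_coef x k * qp (q / x) k = \prod_(j < k) (1 - x * q ^ (-1 - 2 * j%:Z)).
  rewrite /rev_coef -(prod_exprz_odd k q_neq0) -[in (- x) ^+ k](card_ord k) -prodr_const.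
  rewrite /qpoch -!big_split /=; apply: eq_bigr => j _.
  have -> : -1 - 2 * j%:Z = Negz (2 * j) by rewrite NegzE; lia.
  rewrite -[q ^ Negz _]/((q ^+ (2 * j).+1)^-1) -exprM exprS.
  by field; rewrite x0 q_neq0 expf_neq0 ?q_neq0.
(* Counted from the top, the j-th factor is 1 - x q^(n-1-2j) = 1 - x q^(-1-2j). *)
rewrite /qpoch (reindex_inj rev_ord_inj) /=; apply: eqmod_prod => j _; split.
- by apply/regular_qpoch_factor/regularM/regularX/(regular_qz 2).
- by apply: regularB; [apply: regular1 | apply: regularM rx (regular_qz _)].
apply: eqmodD; first exact: eqmod_refl.
apply/eqmodN; rewrite -mulrA; apply: eqmodMl rx _.
rewrite -!exprM -exprD -[q ^+ _]/(q ^ Posz _).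
have -> : Posz (2 * (m - k) + 2 * (k - j.+1)) = -1 - 2 * j%:Z + n%:Z * 1.
  by have := ltn_ord j; lia.
exact: eqmod_qz.
Qed.

Lemma qpoch_low_eqmod x k : (k <= m)%N -> regular_unit x ->
  regular_unit (qp (q / x) m) ->
  eqmod (qp x (m - k)) (qp x m / (rev_coef x k * qp (q / x) k)).
Proof.
move=> km ux uym; have [x0 rx _] := ux; have [_ ry _] := regular_unit_q_div ux.
apply/eqmod_sym/eqmod_divl.
  exact: regular_unitM (regular_unit_rev_coef k ux) (regular_unit_qpoch_le km ry uym).
rewrite -{1}(subnK km) qpochD.
exact: eqmodMl (regular_qpoch _ rx) (qpoch_top_eqmod km x0 rx).
Qed.

Lemma qpoch_ratio_top_eqmod x : regular_unit x -> regular_unit (qp (q / x) m) ->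
  eqmod (qpoch_ratio x m) (rev_coef x m).
Proof.
move=> ux uym; have [B0 _ _] := uym; have [C0 rC _] := regular_unit_rev_coef m ux.
have := qpoch_low_eqmod (leqnn m) ux uym; rewrite subnn [qp x 0]big_ord0 /qpoch_ratio.
move: (rev_coef x m) (qp x m) (qp (q / x) m) C0 rC B0.
move=> C A B C0 rC B0 /eqmod_sym /(eqmodMl rC).
by rewrite mulr1 (_ : C * (A / (C * B)) = A / B) //; field; rewrite C0 B0.
Qed.

Lemma qpoch_ratio_reflect x k : (k <= m)%N -> regular_unit x ->
  regular_unit (qp x m) -> regular_unit (qp (q / x) m) ->
  eqmod (qpoch_ratio x (m - k)) (rev_coef x m * (q / x ^+ 2) ^+ k * qpoch_ratio x k).
Proof.
move=> km ux uxm uym; rewrite /qpoch_ratio; set y := q / x.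
have [x0 rx _] := ux; have uy := regular_unit_q_div ux; have [_ ry _] := uy.
have yK : q / y = x by rewrite /y; field; rewrite q_neq0 x0.
have ux_le j : (j <= m)%N -> regular_unit (qp x j).
  by move=> jm; apply: regular_unit_qpoch_le jm rx uxm.
have uy_le j : (j <= m)%N -> regular_unit (qp y j).
  by move=> jm; apply: regular_unit_qpoch_le jm ry uym.
have ey := qpoch_low_eqmod km uy; rewrite yK in ey.
(* Both halves of the ratio are recovered from the full products up to m. *)
apply: (eqmod_trans (y := qp x m / (rev_coef x k * qp y k) /
                         (qp y m / (rev_coef y k * qp x k)))).
  apply: eqmodM.
  - have /regular_unitV := regular_unitM (regular_unit_rev_coef k ux) (uy_le k km).
    by case/(regular_unitM uxm).
  - by case: (regular_unitV (uy_le _ (leq_subr k m))).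
  - exact: qpoch_low_eqmod km ux uym.
  apply: eqmodV (ey uxm); first exact: uy_le (leq_subr k m).
  have /regular_unitV := regular_unitM (regular_unit_rev_coef k uy) (ux_le k km).
  exact: regular_unitM uym.
have [C0 _ _] := regular_unit_rev_coef k ux; have [S0 rS _] := regular_unit_q_div_sqrX k ux.
have [Ak0 _ _] := ux_le k km; have [Bk0 _ _] := uy_le k km; have [Bm0 _ _] := uy_le m (leqnn m).
rewrite rev_coef_q_div //.
have -> : qp x m / (rev_coef x k * qp y k) / (qp y m / ((q / x ^+ 2) ^+ k * rev_coef x k * qp x k))
    = qp x m / qp y m * (q / x ^+ 2) ^+ k * (qp x k / qp y k).
  move: (rev_coef x k) (qp x m) (qp y m) (qp x k) (qp y k) ((q / x ^+ 2) ^+ k) C0 Ak0 Bk0 Bm0 S0.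
  by move=> C Am Bm Ak Bk S C0 Ak0 Bk0 Bm0 S0; field; rewrite C0 Ak0 Bk0 Bm0 S0.
apply: eqmodMr; first by case: (regular_unitM (ux_le k km) (regular_unitV (uy_le k km))).
exact: eqmodMr rS (qpoch_ratio_top_eqmod ux uym).
Qed.

Lemma qint_reflect k : (k <= m)%N ->
  eqmod (qint q (4 * (m - k)%:Z - 1) * (q ^+ m * (q ^ (- (m * m)%:Z)) ^+ 6 * (q ^+ 4) ^+ k))
        (- qint q (4 * k%:Z - 1)).
Proof.
move=> km; have q0 := q_neq0.
(* Since n = 2m - 1, the exponents below differ by -n(3m + 1) and -n(3m - 1). *)
have -> : q ^+ m * (q ^ (- (m * m)%:Z)) ^+ 6 * (q ^+ 4) ^+ k =
    q ^ ((4 * k%:Z - 1) + n%:Z * (- (3 * m%:Z + 1))).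
  have -> : (4 * k%:Z - 1) + n%:Z * (- (3 * m%:Z + 1)) =
      Posz m + (- (m * m)%:Z) * Posz 6 + Posz (4 * k) by nia.
  have e6 : (q ^ (- (m * m)%:Z)) ^+ 6 = q ^ (- (m * m)%:Z * Posz 6) by rewrite exprnP exprz_exp.
  by rewrite e6 -exprM !expfzDr.
rewrite /qint mulrAC -mulNr; apply: eqmodMr; first by case: regular_unit_1q.
rewrite mulrBl mul1r -expfzDr // opprB -[X in eqmod _ (_ - X)](expr0z q).
apply: eqmodD; first exact: eqmod_qz.
apply: eqmodN.
have -> : 4 * (m - k)%:Z - 1 + ((4 * k%:Z - 1) + n%:Z * (- (3 * m%:Z + 1))) =
    0 + n%:Z * (- (3 * m%:Z - 1)) by nia.
exact: eqmod_qz.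
Qed.

Section Term.
Variables a b c d : K.
Hypothesis abcd_generic : forall t, t \in [:: a; b; c; d] -> t != 0 /\ t ^+ n != 1.

(* The numerator parameters of the summand are the t / q for t in [params]; the
   denominator parameters are the corresponding q / (t / q). *)
Definition params := [:: 1; a; a^-1; b^-1; c; d].

Local Notation T k := (gterm q a%:L b%:L c%:L d%:L k).
Local Notation z := (b%:L * q ^+ 7 / (c%:L * d%:L)).

Lemma params_cases t : t \in params -> t = 1 \/ t != 0 /\ t ^+ n != 1.
Proof.
have gen u : u \in [:: a; b; c; d] -> [/\ u != 0, u ^+ n != 1, u^-1 != 0 & u^-1 ^+ n != 1].
  by move=> /abcd_generic [u0 un]; rewrite invr_eq0 exprVn invr_eq1.
have /gen[a0 an aV0 aVn] : a \in [:: a; b; c; d] by rewrite !inE eqxx.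
have /gen[b0 bn bV0 bVn] : b \in [:: a; b; c; d] by rewrite !inE eqxx !orbT.
have /gen[c0 cn _ _] : c \in [:: a; b; c; d] by rewrite !inE eqxx !orbT.
have /gen[d0 dn _ _] : d \in [:: a; b; c; d] by rewrite !inE eqxx !orbT.
rewrite /params !inE => /orP [/eqP ->|]; first by left.
by move=> /or4P [| | | /orP []] /eqP ->; right.
Qed.

Lemma regular_unit_param t : t \in params -> regular_unit (t%:L / q).
Proof.
move=> /params_cases t_ok; apply: regular_unitM; last exact/regular_unitV/regular_unit_q.
by apply: regular_unitC; case: t_ok => [->|[]//]; rewrite oner_neq0.
Qed.

Lemma regular_unit_qpoch_param t : t \in params -> regular_unit (qp (t%:L / q) m).
Proof.
move=> /params_cases t_ok; apply: regular_unit_prod => i _.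
rewrite div_mul_sqrX ?q_neq0 //; case: t_ok => [-> | [t0 tn]].
  rewrite polyC1 rmorph1 mul1r; apply: regular_unit_1_qz.
  case: (nat_of_ord i) (ltn_ord i) => [|j] jm.
    by rewrite mulr0 sub0r abszN dvdn1 neq_ltn n_gt1 orbT.
  have -> : 2 * j.+1%:Z - 1 = Posz (2 * j).+1 by lia.
  by rewrite absz_nat gtnNdvd //; lia.
exact: regular_unit_1_Cqz.
Qed.

Lemma regular_unit_qpoch_param_inv t : t \in params ->
  regular_unit (qp (q / (t%:L / q)) n.-1).
Proof.
move=> /params_cases t_ok; apply: regular_unit_prod => i _.
rewrite div_div_mul_sqrX -iota_polyCV -[q ^+ _]/(q ^ Posz _).
case: t_ok => [-> | [t0 tn]].
  rewrite invr1 polyC1 rmorph1 mul1r; apply: regular_unit_1_qz.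
  rewrite absz_nat; apply/negP => /dvdnP [e he].
  have i_lt := ltn_ord i; have : (e < 2)%N by nia.
  by case: e he => [|[|e]] he; lia.
apply: regular_unit_1_Cqz; first by rewrite invr_eq0.
by rewrite exprVn invr_eq1.
Qed.

Lemma abcdL_neq0 : [/\ a%:L != 0, b%:L != 0, c%:L != 0 & d%:L != 0].
Proof.
have neq0 t : t \in [:: a; b; c; d] -> t%:L != 0.
  by move=> /abcd_generic [t0 _]; case: (regular_unitC t0).
by split; apply: neq0; rewrite !inE eqxx ?orbT.
Qed.

Lemma regular_unit_z : regular_unit z.
Proof.
have unitL t : t \in [:: a; b; c; d] -> regular_unit t%:L.
  by move=> /abcd_generic [t0 _]; apply: regular_unitC.
have [ub uc ud] : [/\ regular_unit b%:L, regular_unit c%:L & regular_unit d%:L].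
  by split; apply: unitL; rewrite !inE eqxx ?orbT.
exact: regular_unitM (regular_unitM ub (regular_unitX _ regular_unit_q))
  (regular_unitV (regular_unitM uc ud)).
Qed.

Lemma regular_qpoch_ratio t j : t \in params -> (j <= n.-1)%N ->
  regular (qpoch_ratio (t%:L / q) j).
Proof.
move=> tP jn; apply: regularM; first by apply: regular_qpoch; case: (regular_unit_param tP).
have [_ ry _] := regular_unit_q_div (regular_unit_param tP).
by case: (regular_unitV (regular_unit_qpoch_le jn ry (regular_unit_qpoch_param_inv tP))).
Qed.

Lemma gterm_params k : T k =
  qint q (4 * k%:Z - 1) * z ^+ k * \prod_(t <- params) qpoch_ratio (t%:L / q) k.
Proof.
by rewrite gterm_prod_ratio /params !big_cons !big_nil /qpoch_ratio !iota_polyCV polyC1 rmorph1.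
Qed.

Lemma prod_params_opp : \prod_(t <- params) (- (t%:L / q)) = q / z.
Proof.
have [a0 b0 c0 d0] := abcdL_neq0; have q0 := q_neq0.
rewrite /params !big_cons big_nil !iota_polyCV polyC1 rmorph1.
by field; rewrite a0 b0 c0 d0 q0.
Qed.

Lemma prod_params_sq : \prod_(t <- params) (q / (t%:L / q) ^+ 2) = q ^+ 4 * z ^+ 2.
Proof.
have [a0 b0 c0 d0] := abcdL_neq0; have q0 := q_neq0.
rewrite /params !big_cons big_nil !iota_polyCV polyC1 rmorph1.
by field; rewrite a0 b0 c0 d0 q0 oner_neq0.
Qed.

Lemma prod_qpoch_ratio_reflect k : (k <= m)%N ->
  eqmod (\prod_(t <- params) qpoch_ratio (t%:L / q) (m - k))
        ((q / z) ^+ m * (q ^ (- (m * m)%:Z)) ^+ 6 * (q ^+ 4 * z ^+ 2) ^+ k *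
         \prod_(t <- params) qpoch_ratio (t%:L / q) k).
Proof.
move=> km; have m_le : (m <= n.-1)%N by lia.
rewrite -prod_params_opp -prod_params_sq -!prodrXl.
have -> : (q ^ (- (m * m)%:Z)) ^+ 6 = \prod_(t <- params) q ^ (- (m * m)%:Z).
  by rewrite big_const_seq /= !exprS expr0.
rewrite -!big_split big_seq [X in eqmod _ X]big_seq; apply: eqmod_prod => t tP.
have ux := regular_unit_param tP; have [_ ry _] := regular_unit_q_div ux.
split; first by apply: regular_qpoch_ratio tP _; lia.
  apply: regularM; last by apply: regular_qpoch_ratio tP _; lia.
  have := regular_unitM (regular_unit_rev_coef m ux) (regular_unit_q_div_sqrX k ux).
  by case.
apply: qpoch_ratio_reflect km ux (regular_unit_qpoch_param tP) _.
exact: regular_unit_qpoch_le m_le ry (regular_unit_qpoch_param_inv tP).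
Qed.

Lemma term_reflect k : (k <= m)%N -> eqmod (T (m - k)) (- T k).
Proof.
move=> km; have [z0 rz _] := regular_unit_z.
set R := fun j => \prod_(t <- params) qpoch_ratio (t%:L / q) j.
have rRk : regular (R k).
  by rewrite /R big_seq; apply: regular_prod => t tP; apply: regular_qpoch_ratio tP _; lia.
rewrite !gterm_params -/(R _) -/(R _).
apply: eqmod_trans (eqmodMl _ (prod_qpoch_ratio_reflect km)) _.
  by apply: regularM; [apply: regular_qint | apply: regularX].
have -> : qint q (4 * (m - k)%:Z - 1) * z ^+ (m - k) *
    ((q / z) ^+ m * (q ^ (- (m * m)%:Z)) ^+ 6 * (q ^+ 4 * z ^+ 2) ^+ k * R k) =
    qint q (4 * (m - k)%:Z - 1) * (q ^+ m * (q ^ (- (m * m)%:Z)) ^+ 6 * (q ^+ 4) ^+ k) *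
    (z ^+ k * R k).
  rewrite [(q / z) ^+ m]expr_div_n -[in z ^+ m](subnK km) exprD.
  rewrite [(q ^+ 4 * _) ^+ k]exprMn [(z ^+ 2) ^+ k]exprAC.
  have [zmk0 zk0] : z ^+ (m - k) != 0 /\ z ^+ k != 0 by rewrite !expf_neq0.
  move: (z ^+ (m - k)) (z ^+ k) (R k) zmk0 zk0 => Z1 Z2 Rk Z10 Z20.
  by field; rewrite Z10 Z20.
rewrite -[qint q (4 * k%:Z - 1) * _ * _]mulrA -[- (qint q _ * _)]mulNr.
exact: eqmodMr (regularM (regularX _ rz) rRk) (qint_reflect km).
Qed.

Lemma term_tail_vanishing k : (m < k)%N -> (k <= n.-1)%N -> vanishing (T k).
Proof.
(* The factor 1 - q^(-1) q^(2m) = 1 - q^n of (q^(-1); q^2)_k vanishes, while the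
   denominators stay units as long as k <= n - 1. *)
move=> mk kn; have [_ rz _] := regular_unit_z; have one_p : 1 \in params := mem_head _ _.
have ux := regular_unit_param one_p; have [_ rx _] := ux; have [_ ry _] := regular_unit_q_div ux.
rewrite gterm_params /params big_cons /qpoch_ratio.
apply: vanishingMl; first by apply: regularM; [apply: regular_qint | apply: regularX].
apply: vanishingMr; last first.
  rewrite big_seq; apply: regular_prod => t tP.
  exact: regular_qpoch_ratio (mem_behead (s := params) tP) kn.
apply: vanishingMr; last first.
  by case: (regular_unitV (regular_unit_qpoch_le kn ry (regular_unit_qpoch_param_inv one_p))).
rewrite /qpoch (bigD1 (Ordinal mk)) //=; apply: vanishingMr.
  rewrite div_mul_sqrX ?q_neq0 // polyC1 rmorph1 mul1r.
  have -> : 2 * m%:Z - 1 = Posz (n * 1) by lia.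
  by rewrite -opprB; apply/vanishingN/vanishing_qnm_sub1.
by apply: regular_prod => i _; apply: regular_qpoch_factor.
Qed.

Lemma sum_term_vanishing M : M = m \/ M = n.-1 -> vanishing (\sum_(0 <= k < M.+1) T k).
Proof.
have half : vanishing (\sum_(0 <= k < m.+1) T k).
  (* Twice the sum is the sum of the cancelling pairs T k + T (m - k). *)
  apply: vanishing_halve; first by rewrite -(rmorph_nat ratK) fmorph_eq0 pnatr_eq0.
  rewrite mulr2n {2}big_nat_rev -big_split big_nat_cond /=.
  apply: vanishing_sum => k /andP [km _].
  by have := term_reflect km; rewrite /eqmod opprK add0n subSS addrC.
case=> ->; first exact: half.
rewrite (big_cat_nat _ (n := m.+1)) //=; last by lia.
apply: vanishingD half _; rewrite big_nat_cond.
apply: vanishing_sum => k /andP [/andP [mk kn] _].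
by apply: term_tail_vanishing => //; lia.
Qed.

End Term.

End Reflection.

End CongruencesModPhi.


Lemma tofrac_inj (R : idomainType) : injective (@tofrac R).
Proof. by move=> x y /eqP; rewrite tofrac_eq => /eqP. Qed.

Definition ratKc : {rmorphism rat -> Kc} := (@tofrac {mpoly rat[4]}) \o (@mpolyC 4 rat).

Definition indet (i : 'I_4) : Kc := tofrac (mpolyX rat U_(i)%MM).

Lemma indet_generic n : (0 < n)%N ->
  forall t, t \in [:: indet 0; indet 1; indet 2; indet 3] -> t != 0 /\ t ^+ n != 1.
Proof.
move=> n_gt0 t; rewrite !inE => /or4P ti.
have [i ->] : exists i, t = indet i by case: ti => /eqP ->; eexists.
have eval2 p : meval (fun _ => 2%:R : rat) (mpolyX rat U_(i)%MM ^+ p) = 2%:R ^+ p.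
  by rewrite rmorphXn /= mevalXU.
split; rewrite /indet ?tofrac_eq0 -?tofracXn -?tofrac1 ?tofrac_eq.
  by apply: contraTneq isT => /(congr1 (meval (fun _ => 2%:R : rat))); rewrite mevalXU meval0.
apply: contraTneq isT => /(congr1 (meval (fun _ => 2%:R : rat))).
by rewrite eval2 meval1 => /eqP; rewrite pexpr_eq1 // -lt0n n_gt0.
Qed.

Lemma term_gterm k : term k = gterm qv av bv cv dv k.
Proof. by []. Qed.

Lemma congr_mod_vanishing (P : Pq) (x : Fq) : vanishing (@tofrac Pq) P x -> congr_mod x 0 P.
Proof.
move=> [N [D [PN cD D0 ->]]]; exists N, D; rewrite subr0; split=> //.
by apply: contraNneq D0 => ->; rewrite rmorph0.
Qed.

Theorem lemma2p1 (n M : nat) :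
  odd n -> (1 < n)%N -> (M = (n.+1 %/ 2)%N \/ M = n.-1) ->
  congr_mod (\sum_(0 <= k < M.+1) term k) 0 (PhiK n).
Proof.
move=> n_odd n_gt1 hM.
have n_eq : n.+1 = (2 * (n.+1 %/ 2))%N by rewrite mulnC divnK // dvdn2 /= n_odd.
apply: congr_mod_vanishing; rewrite (eq_bigr _ (fun k _ => term_gterm k)).
exact (sum_term_vanishing ratKc (@tofrac_inj Pq) n_gt1 n_eq (indet_generic (ltnW n_gt1)) hM).
Qed.
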